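(* Let $p\in(1/2,1)$, $V\in\{G,B\}$ and $r\ge2$ an integer, and let $p_f$ denote the value of $p_f$ at $\epsilon=\epsilon_r$. Then $$\lim_{\epsilon\to\epsilon_r^+}\mathbb{P}_{Y\text{-cas}}(\epsilon)=p_f^{r+1}\frac{1+(1-p_f)p_f^{r}}{1-r(1-p_f)p_f^{r}},\qquad \lim_{\epsilon\to\epsilon_r^-}\mathbb{P}_{Y\text{-cas}}(\epsilon)=\frac{p_f^{r}}{1-r(1-p_f)p_f^{r}},$$ so that as $\epsilon$ increases through $\epsilon_r$ the probability of a $Y$ cascade decreases, with relative drop $$\delta_r=\frac{\mathbb{P}_{Y\text{-cas}}(\epsilon_r^-)-\mathbb{P}_{Y\text{-cas}}(\epsilon_r^+)}{\mathbb{P}_{Y\text{-cas}}(\epsilon_r^-)}=(1-p_f)(1-p_f^{r+1}).$$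
   Context: Observational learning model: an item has true value $V\in\{G,B\}$; agents arrive sequentially, each receives a private binary signal equal to the ''correct'' signal with probability $p\in(1/2,1)$, and each agent is independently fake with probability $\epsilon\in[0,1)$ (a fake agent's recorded action is always $Y$ = buy). Define $a=p+(1-p)\epsilon$, $b=p(1-\epsilon)$, $\alpha=p/(1-p)$ and $\eta=\eta(\epsilon)=\log\big(a/(1-b)\big)/\log\alpha\in(0,1]$. Given $V$, let $p_f=a$ if $V=G$ and $p_f=1-b$ if $V=B$. Before any cascade, the agents' sufficient statistic $h$ evolves as the following random walk: $h_0=0$ and, independently at each step, $h$ increases by $\eta$ with probability $p_f$ (an observed $Y$) or decreases by $1$ with probability $1-p_f$ (an observed $N$); the walk is stopped the first time it leaves $[-1,1]$. Leaving above $1$ is a $Y$ cascade. $\mathbb{P}_{Y\text{-cas}}(\epsilon)$ denotes the probability (given $V$) that the walk leaves $[-1,1]$ above $1$. The thresholds are $\epsilon_r=\dfrac{\alpha-\alpha^{1/r}}{\alpha^{1/r+1}-1}$, $r=1,2,\ldots$. *)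

From Stdlib Require Import Reals Lra.
From Coquelicot Require Import Coquelicot.
Open Scope R_scope.

(* true value of the item *)
Inductive value := G | B.

Definition par_a (p eps : R) : R := p + (1 - p) * eps.
Definition par_b (p eps : R) : R := p * (1 - eps).
Definition alpha (p : R) : R := p / (1 - p).
Definition eta (p eps : R) : R :=
  ln (par_a p eps / (1 - par_b p eps)) / ln (alpha p).

(* probability of an observed Y, given V *)
Definition pf (p eps : R) (V : value) : R :=
  match V with G => par_a p eps | B => 1 - par_b p eps end.

(* absY n q d h : probability that the walk started at h (steps +d w.p. q,
   -1 w.p. 1-q, stopped when leaving [-1,1]) has left [-1,1] above 1
   within n steps. *)
Fixpoint absY (n : nat) (q d h : R) : R :=
  match n with
  | O => if Rlt_dec 1 h then 1 else 0
  | S m => if Rlt_dec 1 h then 1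
           else if Rlt_dec h (-1) then 0
           else q * absY m q d (h + d) + (1 - q) * absY m q d (h - 1)
  end.

(* P_{Y-cas}(eps): probability (given V) that the walk from h_0 = 0
   ever leaves [-1,1] above 1 (limit of the nondecreasing bounded sequence). *)
Definition PYcas (p eps : R) (V : value) : R :=
  real (Lim_seq (fun n => absY n (pf p eps V) (eta p eps) 0)).

Definition eps_r (p : R) (r : nat) : R :=
  (alpha p - Rpower (alpha p) (1 / INR r))
  / (Rpower (alpha p) (1 / INR r + 1) - 1).

(* At [eps = eps_r] the up-step is exactly [eta = 1/r], and [eta] decreases in [eps].
   Write the up-step as [1/r + dl]: after [a] up-steps and [b] down-steps the walk is at
   [(a - b r)/r + a dl], a point of the lattice [Z/r] shifted by the drift [a dl].  While
   [|a dl| < 1/(2r)] every exit test of [[-1, 1]] gives the same answer as for the walk with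
   step [1/r] on the lattice [(Z + 1/2)/r]: from the start if [dl > 0], and from the first
   up-step on if [dl < 0].  That lattice walk is a finite absorbing chain solved in closed
   form: from [1/(2r)] it exits above with probability [q^r / (1 - r (1-q) q^r)].  Since any
   three down-steps end the walk, the [n]-step probabilities are within
   [(1 - (1-q)^3)^(n/3)] of their limits uniformly in the step, so letting [dl -> 0] from
   either side gives the two one-sided limits. *)

From Stdlib Require Import Reals Lra Lia ZArith.
From Coquelicot Require Import Coquelicot.
Open Scope R_scope.

Fixpoint surv (n : nat) (q d h : R) : R :=
  match n with
  | O => if Rlt_dec 1 h then 0 else if Rlt_dec h (-1) then 0 else 1
  | S m => if Rlt_dec 1 h then 0
           else if Rlt_dec h (-1) then 0
           else q * surv m q d (h + d) + (1 - q) * surv m q d (h - 1)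
  end.

Definition PY (q d h : R) : R := real (Lim_seq (fun n => absY n q d h)).

Definition surv_rate (q : R) : R := 1 - (1 - q) ^ 3.

Lemma surv_rate_bounds (q : R) : 0 <= q <= 1 -> 0 <= surv_rate q <= 1.
Proof.
  intros Hq. unfold surv_rate.
  assert (0 <= (1 - q) ^ 3 <= 1)
    by (split; [apply pow_le | rewrite <- (pow1 3); apply pow_incr]; lra).
  lra.
Qed.

Lemma surv_rate_lt1 (q : R) : q < 1 -> surv_rate q < 1.
Proof. intros Hq. unfold surv_rate. assert (0 < (1 - q) ^ 3) by (apply pow_lt; lra). lra. Qed.

Lemma geometric_lt (rho c eps : R) : 0 <= rho < 1 -> 0 < eps -> exists K : nat, c * rho ^ K < eps.
Proof.
  intros Hrho Heps.
  destruct (pow_lt_1_zero rho ltac:(rewrite Rabs_pos_eq; lra) (eps / (Rabs c + 1))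
              ltac:(apply Rdiv_lt_0_compat; [lra | pose proof (Rabs_pos c); lra])) as [K HK].
  exists K. specialize (HK K (Nat.le_refl K)). rewrite Rabs_pos_eq in HK by (apply pow_le; lra).
  pose proof (Rle_abs c). pose proof (Rabs_pos c). pose proof (pow_le rho K ltac:(lra)).
  apply (Rmult_lt_compat_l (Rabs c + 1)) in HK; [|lra].
  replace ((Rabs c + 1) * (eps / (Rabs c + 1))) with eps in HK by (field; lra). nra.
Qed.

Section Walk.
Variables (q d : R).
Hypothesis Hq : 0 <= q <= 1.

Lemma absY_bounds n h : 0 <= absY n q d h <= 1.
Proof.
  revert h; induction n; intros h; simpl.
  - destruct (Rlt_dec 1 h); lra.
  - destruct (Rlt_dec 1 h); [lra|]. destruct (Rlt_dec h (-1)); [lra|].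
    pose proof (IHn (h + d)); pose proof (IHn (h - 1)). nra.
Qed.

Lemma surv_bounds n h : 0 <= surv n q d h <= 1.
Proof.
  revert h; induction n; intros h; simpl.
  - destruct (Rlt_dec 1 h); [lra|]. destruct (Rlt_dec h (-1)); lra.
  - destruct (Rlt_dec 1 h); [lra|]. destruct (Rlt_dec h (-1)); [lra|].
    pose proof (IHn (h + d)); pose proof (IHn (h - 1)). nra.
Qed.

Lemma absY_below n h : h < -1 -> absY n q d h = 0.
Proof.
  intros H; destruct n; simpl; destruct (Rlt_dec 1 h); try lra; destruct (Rlt_dec h (-1)); lra.
Qed.

Lemma absY_above n h : 1 < h -> absY n q d h = 1.
Proof. intros H; destruct n; simpl; destruct (Rlt_dec 1 h); lra. Qed.

Lemma surv_outside n h : 1 < h \/ h < -1 -> surv n q d h = 0.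
Proof.
  intros H; destruct n; simpl; destruct (Rlt_dec 1 h); try lra; destruct (Rlt_dec h (-1)); lra.
Qed.

Lemma absY_S n h : -1 <= h <= 1 ->
  absY (S n) q d h = q * absY n q d (h + d) + (1 - q) * absY n q d (h - 1).
Proof.
  intros H. simpl. destruct (Rlt_dec 1 h); [lra|]. destruct (Rlt_dec h (-1)); [lra|]. reflexivity.
Qed.

Lemma surv_S n h : -1 <= h <= 1 ->
  surv (S n) q d h = q * surv n q d (h + d) + (1 - q) * surv n q d (h - 1).
Proof.
  intros H. simpl. destruct (Rlt_dec 1 h); [lra|]. destruct (Rlt_dec h (-1)); [lra|]. reflexivity.
Qed.

Lemma absY_le_S n h : absY n q d h <= absY (S n) q d h.
Proof.
  revert h; induction n; intros h.
  - simpl. destruct (Rlt_dec 1 h); [lra|]. destruct (Rlt_dec h (-1)); [lra|].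
    pose proof (absY_bounds 0 (h + d)); pose proof (absY_bounds 0 (h - 1)). simpl in *. nra.
  - change (absY (S n) q d h <= absY (S (S n)) q d h). simpl.
    destruct (Rlt_dec 1 h); [lra|]. destruct (Rlt_dec h (-1)); [lra|].
    pose proof (IHn (h + d)); pose proof (IHn (h - 1)). simpl in *. nra.
Qed.

Lemma absY_add_le n m h : absY (n + m) q d h <= absY n q d h + surv n q d h.
Proof.
  revert h; induction n; intros h; simpl.
  - pose proof (absY_bounds m h). destruct (Rlt_dec 1 h).
    + destruct m; simpl; destruct (Rlt_dec 1 h); lra.
    + destruct (Rlt_dec h (-1)); [rewrite absY_below|]; lra.
  - destruct (Rlt_dec 1 h); [lra|]. destruct (Rlt_dec h (-1)); [lra|].
    pose proof (IHn (h + d)); pose proof (IHn (h - 1)). nra.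
Qed.

Lemma surv_add_le n m B : 0 <= B -> (forall h, surv m q d h <= B) ->
  forall h, surv (n + m) q d h <= surv n q d h * B.
Proof.
  intros HB Hm. induction n; intros h; simpl.
  - destruct (Rlt_dec 1 h); [rewrite surv_outside; lra|].
    destruct (Rlt_dec h (-1)); [rewrite surv_outside; lra|]. specialize (Hm h); lra.
  - destruct (Rlt_dec 1 h); [lra|]. destruct (Rlt_dec h (-1)); [lra|].
    pose proof (IHn (h + d)); pose proof (IHn (h - 1)). nra.
Qed.

(* [(1-q)^3] is the probability of three consecutive down-steps, which leave [-1, 1]
   from any point of it. *)
Lemma surv_3 h : surv 3 q d h <= surv_rate q.
Proof.
  assert (Hdown : forall n h, surv (S n) q d h <= q + (1 - q) * surv n q d (h - 1)).
  { intros n h'. simpl. pose proof (surv_bounds n (h' - 1)). pose proof (surv_bounds n (h' + d)).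
    destruct (Rlt_dec 1 h'); [nra|]. destruct (Rlt_dec h' (-1)); nra. }
  pose proof (surv_rate_bounds q Hq).
  destruct (Rlt_dec 1 h); [rewrite surv_outside; lra|].
  pose proof (Hdown 2%nat h). pose proof (Hdown 1%nat (h - 1)).
  pose proof (Hdown 0%nat (h - 1 - 1)).
  rewrite (surv_outside 0 (h - 1 - 1 - 1)) in * by lra.
  assert (surv 2 q d (h - 1) <= q + (1 - q) * q) by nra.
  replace (surv_rate q) with (q + (1 - q) * (q + (1 - q) * q)) by (unfold surv_rate; ring).
  nra.
Qed.

Lemma surv_geometric K h : surv (3 * K) q d h <= surv_rate q ^ K.
Proof.
  pose proof (surv_rate_bounds q Hq).
  revert h; induction K; intros h.
  - apply surv_bounds.
  - replace (3 * S K)%nat with (3 + 3 * K)%nat by lia.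
    eapply Rle_trans; [apply (surv_add_le 3 (3 * K) (surv_rate q ^ K)); auto; apply pow_le; lra|].
    apply Rmult_le_compat_r; [apply pow_le; lra | apply surv_3].
Qed.

Lemma PY_is_lim h : is_lim_seq (fun n => absY n q d h) (PY q d h).
Proof.
  assert (Hex : ex_finite_lim_seq (fun n => absY n q d h)).
  { apply (ex_finite_lim_seq_incr _ 1); intros; [apply absY_le_S | apply absY_bounds]. }
  unfold PY. destruct Hex as [l Hl]. rewrite (is_lim_seq_unique _ _ Hl). exact Hl.
Qed.

Lemma PY_absY_dist n h : Rabs (PY q d h - absY n q d h) <= surv n q d h.
Proof.
  assert (Hmono : forall m, absY n q d h <= absY (m + n) q d h).
  { induction m; simpl; [lra|]. eapply Rle_trans; [apply IHm | apply absY_le_S]. }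
  assert (Hlo : Rbar_le (absY n q d h) (PY q d h)).
  { apply (is_lim_seq_le_loc (fun _ => absY n q d h) (fun m => absY m q d h));
      [| apply is_lim_seq_const | apply PY_is_lim].
    exists n. intros m Hm. replace m with ((m - n) + n)%nat by lia. apply Hmono. }
  assert (Hhi : Rbar_le (PY q d h) (absY n q d h + surv n q d h)).
  { apply (is_lim_seq_le_loc (fun m => absY m q d h) (fun _ => absY n q d h + surv n q d h));
      [| apply PY_is_lim | apply is_lim_seq_const].
    exists n. intros m Hm. replace m with (n + (m - n))%nat by lia. apply absY_add_le. }
  simpl in Hlo, Hhi. apply Rabs_le_between. lra.
Qed.

Lemma PY_below h : h < -1 -> PY q d h = 0.
Proof.
  intros H. unfold PY. rewrite (Lim_seq_ext _ (fun _ => 0)) by (intros; apply absY_below; auto).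
  rewrite Lim_seq_const. reflexivity.
Qed.

Lemma PY_step h : -1 <= h <= 1 -> PY q d h = q * PY q d (h + d) + (1 - q) * PY q d (h - 1).
Proof.
  intros H.
  assert (Hl : is_lim_seq (fun n => absY (S n) q d h)
                          (q * PY q d (h + d) + (1 - q) * PY q d (h - 1))).
  { apply (is_lim_seq_ext (fun n => q * absY n q d (h + d) + (1 - q) * absY n q d (h - 1)));
      [intros; symmetry; apply absY_S; auto|].
    apply is_lim_seq_plus'; apply (is_lim_seq_scal_l _ _ (Finite _)), PY_is_lim. }
  apply (is_lim_seq_incr_1 (fun n => absY n q d h)) in Hl.
  pose proof (is_lim_seq_unique _ _ Hl) as E. rewrite (is_lim_seq_unique _ _ (PY_is_lim h)) in E.
  now injection E.
Qed.

End Walk.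

Definition same_region (x y : R) : Prop := (1 < x <-> 1 < y) /\ (x < -1 <-> y < -1).

Lemma absY_coupling n q d d' h h' :
  (forall a b, (a + b <= n)%nat -> same_region (h + INR a * d - INR b) (h' + INR a * d' - INR b)) ->
  absY n q d h = absY n q d' h'.
Proof.
  revert h h'; induction n; intros h h' Hs;
    destruct (Hs 0%nat 0%nat ltac:(lia)) as [Habove Hbelow]; simpl in Habove, Hbelow |- *;
    rewrite !Rmult_0_l, !Rplus_0_r, !Rminus_0_r in Habove, Hbelow.
  - destruct (Rlt_dec 1 h), (Rlt_dec 1 h'); tauto.
  - destruct (Rlt_dec 1 h), (Rlt_dec 1 h'); try tauto.
    destruct (Rlt_dec h (-1)), (Rlt_dec h' (-1)); try tauto.
    rewrite (IHn (h + d) (h' + d')), (IHn (h - 1) (h' - 1)); [reflexivity | |].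
    + intros a b Hab. specialize (Hs a (S b) ltac:(lia)). rewrite S_INR in Hs.
      replace (h - 1 + INR a * d - INR b) with (h + INR a * d - (INR b + 1)) by ring.
      replace (h' - 1 + INR a * d' - INR b) with (h' + INR a * d' - (INR b + 1)) by ring.
      exact Hs.
    + intros a b Hab. specialize (Hs (S a) b ltac:(lia)). rewrite S_INR in Hs.
      replace (h + d + INR a * d - INR b) with (h + (INR a + 1) * d - INR b) by ring.
      replace (h' + d' + INR a * d' - INR b) with (h' + (INR a + 1) * d' - INR b) by ring.
      exact Hs.
Qed.

Lemma PY_coupled_close q d d' h h' K : 0 <= q <= 1 ->
  (forall a b, (a + b <= 3 * K)%nat ->
     same_region (h + INR a * d - INR b) (h' + INR a * d' - INR b)) ->
  Rabs (PY q d h - PY q d' h') <= 2 * surv_rate q ^ K.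
Proof.
  intros Hq Hs.
  pose proof (PY_absY_dist q d Hq (3 * K) h) as Hl.
  pose proof (PY_absY_dist q d' Hq (3 * K) h') as Hl'.
  pose proof (surv_geometric q d Hq K h). pose proof (surv_geometric q d' Hq K h').
  rewrite (absY_coupling (3 * K) q d d' h h' Hs) in Hl.
  apply Rabs_le_between in Hl, Hl'. apply Rabs_le_between. lra.
Qed.

Lemma lattice_above (r : nat) (z : Z) (s : R) : (1 <= r)%nat -> Rabs s < / INR r ->
  (1 < IZR z / INR r + s <-> (Z.of_nat r < z)%Z \/ (z = Z.of_nat r /\ 0 < s)).
Proof.
  intros Hr Hs.
  assert (HR : 0 < INR r) by (apply lt_0_INR; lia).
  assert (Ht : - 1 < INR r * s < 1).
  { apply Rabs_lt_between. rewrite Rabs_mult, Rabs_pos_eq by lra.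
    apply (Rmult_lt_compat_l (INR r)) in Hs; [|lra]. rewrite Rinv_r in Hs; lra. }
  assert (Hw : IZR z = INR r * (IZR z / INR r)) by (field; lra).
  set (w := IZR z / INR r) in *.
  rewrite INR_IZR_INZ in HR, Ht, Hw.
  destruct (Z.lt_total z (Z.of_nat r)) as [Hlt | [-> | Hgt]].
  - assert (IZR z <= IZR (Z.of_nat r) - 1) by (rewrite <- minus_IZR; apply IZR_le; lia).
    split; [intros; nra | intros [H' | [H' _]]; lia].
  - split; [intros; right; split; [reflexivity | nra] | intros [H' | [_ H']]; [lia | nra]].
  - assert (IZR (Z.of_nat r) + 1 <= IZR z) by (rewrite <- plus_IZR; apply IZR_le; lia).
    split; [intros; left; exact Hgt | intros; nra].
Qed.

Lemma lattice_below (r : nat) (z : Z) (s : R) : (1 <= r)%nat -> Rabs s < / INR r ->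
  (IZR z / INR r + s < -1 <-> (z < - Z.of_nat r)%Z \/ (z = (- Z.of_nat r)%Z /\ s < 0)).
Proof.
  intros Hr Hs. rewrite <- Rabs_Ropp in Hs.
  pose proof (lattice_above r (- z) (- s) Hr Hs) as H. rewrite opp_IZR in H.
  replace (- IZR z / INR r + - s) with (- (IZR z / INR r + s)) in H by (unfold Rdiv; ring).
  split; intros H'.
  - destruct (proj1 H ltac:(lra)) as [H1 | [H1 H2]]; [left; lia | right; split; [lia | lra]].
  - enough (1 < - (IZR z / INR r + s)) by lra.
    apply H. destruct H' as [H1 | [H1 H2]]; [left; lia | right; split; [lia | lra]].
Qed.

Lemma same_region_lattice (r : nat) (z : Z) (s s' : R) : (1 <= r)%nat ->
  Rabs s < / INR r -> Rabs s' < / INR r ->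
  (z = Z.of_nat r -> (0 < s <-> 0 < s')) ->
  (z = (- Z.of_nat r)%Z -> (s < 0 <-> s' < 0)) ->
  same_region (IZR z / INR r + s) (IZR z / INR r + s').
Proof.
  intros Hr Hs Hs' Htop Hbot. split.
  - rewrite !lattice_above by assumption.
    destruct (Z.eq_dec z (Z.of_nat r)) as [E|E]; [specialize (Htop E)|]; intuition.
  - rewrite !lattice_below by assumption.
    destruct (Z.eq_dec z (- Z.of_nat r)) as [E|E]; [specialize (Hbot E)|]; intuition.
Qed.

Lemma lattice_position (r a b : nat) (dl : R) : (1 <= r)%nat ->
  INR a * (/ INR r + dl) - INR b
  = IZR (Z.of_nat a - Z.of_nat b * Z.of_nat r) / INR r + INR a * dl.
Proof.
  intros Hr. assert (0 < INR r) by (apply lt_0_INR; lia).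
  rewrite minus_IZR, mult_IZR, <- !INR_IZR_INZ. field. lra.
Qed.

(* The offset [1/(2r)] keeps the lattice off the exit thresholds [-1, 1], which lie in [Z/r]. *)
Definition mid_lattice (r : nat) (j : Z) : R := IZR j / INR r + / INR r / 2.

Lemma mid_lattice_succ r j : mid_lattice r j + / INR r = mid_lattice r (j + 1).
Proof. unfold mid_lattice. rewrite plus_IZR. unfold Rdiv. ring. Qed.

Lemma mid_lattice_sub r j : (1 <= r)%nat -> mid_lattice r j - 1 = mid_lattice r (j - Z.of_nat r).
Proof.
  intros Hr. assert (0 < INR r) by (apply lt_0_INR; lia).
  unfold mid_lattice. rewrite minus_IZR, <- INR_IZR_INZ. field. lra.
Qed.

Lemma mid_lattice_above r j : (1 <= r)%nat -> (1 < mid_lattice r j <-> (Z.of_nat r <= j)%Z).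
Proof.
  intros Hr. assert (0 < / INR r) by (apply Rinv_0_lt_compat, lt_0_INR; lia).
  unfold mid_lattice. rewrite lattice_above by (auto; rewrite Rabs_pos_eq; lra).
  split; [intros [H' | [H' _]]; lia | intros H'].
  destruct (Z.eq_dec j (Z.of_nat r)); [right; split; auto; lra | left; lia].
Qed.

Lemma mid_lattice_below r j : (1 <= r)%nat -> (mid_lattice r j < -1 <-> (j < - Z.of_nat r)%Z).
Proof.
  intros Hr. assert (0 < / INR r) by (apply Rinv_0_lt_compat, lt_0_INR; lia).
  unfold mid_lattice. rewrite lattice_below by (auto; rewrite Rabs_pos_eq; lra).
  split; [intros [H' | [_ H']]; [lia | lra] | intros H'; left; exact H'].
Qed.

Lemma mid_lattice_inside r j : (1 <= r)%nat -> (- Z.of_nat r <= j < Z.of_nat r)%Z ->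
  -1 <= mid_lattice r j <= 1.
Proof.
  intros Hr Hj.
  assert (~ 1 < mid_lattice r j) by (rewrite mid_lattice_above; lia).
  assert (~ mid_lattice r j < -1) by (rewrite mid_lattice_below; lia). lra.
Qed.

Lemma lattice_harmonic_absY (q M : R) (r : nat) (F : Z -> R) :
  0 <= q <= 1 -> (1 <= r)%nat ->
  (forall j, (Z.of_nat r <= j)%Z -> F j = 1) ->
  (forall j, (j < - Z.of_nat r)%Z -> F j = 0) ->
  (forall j, (- Z.of_nat r <= j < Z.of_nat r)%Z ->
     Rabs (F j) <= M /\ F j = q * F (j + 1)%Z + (1 - q) * F (j - Z.of_nat r)%Z) ->
  forall n j, Rabs (F j - absY n q (/ INR r) (mid_lattice r j))
              <= M * surv n q (/ INR r) (mid_lattice r j).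
Proof.
  intros Hq Hr Htop Hbot Hin n. induction n; intros j.
  all: destruct (Z_le_gt_dec (Z.of_nat r) j) as [Hj | Hj];
    [ assert (1 < mid_lattice r j) by (apply mid_lattice_above; auto);
      rewrite Htop, absY_above, surv_outside by auto;
      rewrite Rminus_diag, Rabs_R0, Rmult_0_r; lra | ].
  all: destruct (Z_lt_ge_dec j (- Z.of_nat r)) as [Hj' | Hj'];
    [ assert (mid_lattice r j < -1) by (apply mid_lattice_below; auto);
      rewrite Hbot, absY_below, surv_outside by auto;
      rewrite Rminus_0_r, Rabs_R0, Rmult_0_r; lra | ].
  all: assert (Hpt : -1 <= mid_lattice r j <= 1) by (apply mid_lattice_inside; auto; lia).
  all: destruct (Hin j ltac:(lia)) as [HM Hharm].
  - simpl. destruct (Rlt_dec 1 (mid_lattice r j)); [lra|].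
    destruct (Rlt_dec (mid_lattice r j) (-1)); [lra|]. rewrite Rminus_0_r, Rmult_1_r. exact HM.
  - rewrite absY_S, surv_S, Hharm, mid_lattice_succ, mid_lattice_sub by (auto; lra).
    pose proof (IHn (j + 1)%Z) as I1. pose proof (IHn (j - Z.of_nat r)%Z) as I2.
    set (F1 := F (j + 1)%Z) in *. set (F2 := F (j - Z.of_nat r)%Z) in *.
    set (a1 := absY n q _ (mid_lattice r (j + 1))) in *.
    set (a2 := absY n q _ (mid_lattice r (j - Z.of_nat r))) in *.
    replace (q * F1 + (1 - q) * F2 - (q * a1 + (1 - q) * a2))
      with (q * (F1 - a1) + (1 - q) * (F2 - a2)) by ring.
    eapply Rle_trans; [apply Rabs_triang|].
    rewrite !Rabs_mult, (Rabs_pos_eq q), (Rabs_pos_eq (1 - q)) by lra. nra.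
Qed.

Lemma pow_bernoulli_le1 (q : R) (n : nat) : 0 <= q <= 1 -> q ^ n * (1 + INR n * (1 - q)) <= 1.
Proof.
  intros Hq; induction n as [|n IHn]; [simpl; lra|].
  rewrite S_INR. simpl pow.
  assert (0 <= q ^ n <= 1) by (split; [apply pow_le | rewrite <- (pow1 n); apply pow_incr]; lra).
  assert (0 <= (1 - q) * (1 - q * q ^ n)) by (apply Rmult_le_pos; nra).
  nra.
Qed.

Definition cascade_denom (q : R) (r : nat) : R := 1 - INR r * (1 - q) * q ^ r.

Lemma cascade_denom_ge (q : R) (r : nat) : 0 <= q <= 1 -> q ^ r <= cascade_denom q r.
Proof. intros Hq. pose proof (pow_bernoulli_le1 q r Hq). unfold cascade_denom. nra. Qed.

Lemma cascade_denom_pos (q : R) (r : nat) : 0 < q <= 1 -> 0 < cascade_denom q r.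
Proof.
  intros Hq. pose proof (pow_lt q r ltac:(lra)). pose proof (cascade_denom_ge q r ltac:(lra)). lra.
Qed.

Definition lattice_cascade (q : R) (r : nat) : R := q ^ r / cascade_denom q r.

Lemma lattice_cascade_pos (q : R) (r : nat) : 0 < q <= 1 -> 0 < lattice_cascade q r.
Proof.
  intros Hq. apply Rdiv_lt_0_compat; [apply pow_lt; lra | apply cascade_denom_pos; auto].
Qed.

Lemma lattice_cascade_fixpoint (q : R) (r : nat) : 0 < q <= 1 ->
  lattice_cascade q r = q ^ r * (1 + INR r * (1 - q) * lattice_cascade q r).
Proof.
  intros Hq. pose proof (cascade_denom_pos q r Hq).
  unfold lattice_cascade, cascade_denom in *. field. lra.
Qed.

Definition lattice_cascade_right (q : R) (r : nat) : R :=
  q * lattice_cascade q r + (1 - q) * q * (q ^ r * lattice_cascade q r).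

Definition lattice_cascade_at (q : R) (r : nat) (j : Z) : R :=
  if Z_lt_dec j (- Z.of_nat r) then 0
  else if Z_lt_dec j 0 then q ^ Z.to_nat (- j) * lattice_cascade q r
  else if Z_lt_dec j (Z.of_nat r) then
    q ^ Z.to_nat (Z.of_nat r - j)
    * (1 + INR (Z.to_nat (Z.of_nat r - j)) * (1 - q) * lattice_cascade q r)
  else 1.

Section LatticeCascade.
Variables (q : R) (r : nat).
Hypotheses (Hq : 0 < q <= 1) (Hr : (1 <= r)%nat).

Lemma lattice_cascade_at_top j : (Z.of_nat r <= j)%Z -> lattice_cascade_at q r j = 1.
Proof.
  intros Hj. unfold lattice_cascade_at.
  destruct (Z_lt_dec j (- Z.of_nat r)); [lia|]. destruct (Z_lt_dec j 0); [lia|].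
  destruct (Z_lt_dec j (Z.of_nat r)); [lia | reflexivity].
Qed.

Lemma lattice_cascade_at_bottom j : (j < - Z.of_nat r)%Z -> lattice_cascade_at q r j = 0.
Proof.
  intros Hj. unfold lattice_cascade_at. destruct (Z_lt_dec j (- Z.of_nat r)); [reflexivity | lia].
Qed.

Lemma lattice_cascade_at_neg (i : nat) : (i <= r)%nat ->
  lattice_cascade_at q r (- Z.of_nat i) = q ^ i * lattice_cascade q r.
Proof.
  intros Hi. unfold lattice_cascade_at.
  destruct (Z_lt_dec (- Z.of_nat i) (- Z.of_nat r)); [lia|].
  destruct (Z_lt_dec (- Z.of_nat i) 0).
  - now replace (Z.to_nat (- - Z.of_nat i)) with i by lia.
  - assert (i = 0%nat) by lia. subst i.
    destruct (Z_lt_dec (- Z.of_nat 0) (Z.of_nat r)); [|lia].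
    replace (Z.to_nat (Z.of_nat r - - Z.of_nat 0)) with r by lia.
    rewrite <- lattice_cascade_fixpoint by assumption. simpl. ring.
Qed.

Lemma lattice_cascade_at_nonneg (i : nat) : (i <= r)%nat ->
  lattice_cascade_at q r (Z.of_nat r - Z.of_nat i)
  = q ^ i * (1 + INR i * (1 - q) * lattice_cascade q r).
Proof.
  intros Hi. unfold lattice_cascade_at.
  destruct (Z_lt_dec (Z.of_nat r - Z.of_nat i) (- Z.of_nat r)); [lia|].
  destruct (Z_lt_dec (Z.of_nat r - Z.of_nat i) 0); [lia|].
  destruct (Z_lt_dec (Z.of_nat r - Z.of_nat i) (Z.of_nat r)).
  - now replace (Z.to_nat (Z.of_nat r - (Z.of_nat r - Z.of_nat i))) with i by lia.
  - assert (i = 0%nat) by lia. subst i. simpl. ring.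
Qed.

Lemma lattice_cascade_at_harmonic j : (- Z.of_nat r <= j < Z.of_nat r)%Z ->
  lattice_cascade_at q r j
  = q * lattice_cascade_at q r (j + 1) + (1 - q) * lattice_cascade_at q r (j - Z.of_nat r).
Proof.
  intros Hj. destruct (Z_le_gt_dec 0 j) as [Hj0 | Hj0].
  - destruct (Nat.eq_dec (Z.to_nat (Z.of_nat r - j)) 0) as [E|E]; [lia|].
    set (i := pred (Z.to_nat (Z.of_nat r - j))).
    replace j with (Z.of_nat r - Z.of_nat (S i))%Z by (unfold i; lia).
    replace (Z.of_nat r - Z.of_nat (S i) + 1)%Z with (Z.of_nat r - Z.of_nat i)%Z by lia.
    replace (Z.of_nat r - Z.of_nat (S i) - Z.of_nat r)%Z with (- Z.of_nat (S i))%Z by lia.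
    rewrite !lattice_cascade_at_nonneg, lattice_cascade_at_neg by (unfold i; lia).
    rewrite S_INR. simpl pow. ring.
  - set (i := Z.to_nat (- j - 1)).
    replace j with (- Z.of_nat (S i))%Z by (unfold i; lia).
    replace (- Z.of_nat (S i) + 1)%Z with (- Z.of_nat i)%Z by lia.
    rewrite (lattice_cascade_at_bottom (- Z.of_nat (S i) - Z.of_nat r)) by lia.
    rewrite !lattice_cascade_at_neg by (unfold i; lia). simpl pow. ring.
Qed.

Lemma lattice_cascade_at_bound j :
  Rabs (lattice_cascade_at q r j) <= 1 + INR r * lattice_cascade q r.
Proof.
  pose proof (lattice_cascade_pos q r Hq) as HF. pose proof (pos_INR r).
  assert (Hpow : forall n, 0 <= q ^ n <= 1)
    by (intros n; split; [apply pow_le | rewrite <- (pow1 n); apply pow_incr]; lra).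
  assert (1 <= INR r) by (apply (le_INR 1); lia).
  unfold lattice_cascade_at.
  destruct (Z_lt_dec j (- Z.of_nat r)); [rewrite Rabs_R0; nra|].
  destruct (Z_lt_dec j 0).
  - specialize (Hpow (Z.to_nat (- j))). rewrite Rabs_pos_eq by nra. nra.
  - destruct (Z_lt_dec j (Z.of_nat r)); [| rewrite Rabs_R1; nra].
    set (i := Z.to_nat (Z.of_nat r - j)). specialize (Hpow i).
    assert (0 <= INR i <= INR r) by (split; [apply pos_INR | apply le_INR; unfold i; lia]).
    assert (INR i * (1 - q) <= INR r) by nra.
    assert (0 <= INR i * (1 - q) * lattice_cascade q r <= INR r * lattice_cascade q r)
      by (split; [apply Rmult_le_pos; [apply Rmult_le_pos|] | apply Rmult_le_compat_r]; lra).
    rewrite Rabs_pos_eq by nra. nra.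
Qed.

End LatticeCascade.

Lemma PY_mid_lattice (q : R) (r : nat) (j : Z) : 0 < q < 1 -> (1 <= r)%nat ->
  PY q (/ INR r) (mid_lattice r j) = lattice_cascade_at q r j.
Proof.
  intros Hq Hr.
  set (M := 1 + INR r * lattice_cascade q r).
  assert (Hbound : forall K, Rabs (PY q (/ INR r) (mid_lattice r j) - lattice_cascade_at q r j)
                             <= (M + 1) * surv_rate q ^ K).
  { intros K.
    assert (Hlattice : Rabs (lattice_cascade_at q r j - absY (3 * K) q (/ INR r) (mid_lattice r j))
                       <= M * surv (3 * K) q (/ INR r) (mid_lattice r j)).
    { apply lattice_harmonic_absY; try lra; auto.
      - intros; apply lattice_cascade_at_top; auto.
      - intros; apply lattice_cascade_at_bottom; auto.
      - intros; split; [apply lattice_cascade_at_bound | apply lattice_cascade_at_harmonic];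
          auto; lra. }
    pose proof (PY_absY_dist q (/ INR r) ltac:(lra) (3 * K) (mid_lattice r j)) as Hlimit.
    pose proof (surv_geometric q (/ INR r) ltac:(lra) K (mid_lattice r j)) as Hsurv.
    assert (0 <= M)
      by (pose proof (pos_INR r); pose proof (lattice_cascade_pos q r ltac:(lra)); unfold M; nra).
    apply Rabs_le_between in Hlattice, Hlimit. apply Rabs_le_between. nra. }
  apply Rminus_diag_uniq. apply Rabs_eq_0. apply Rle_antisym; [| apply Rabs_pos].
  apply Rnot_lt_le. intros Hpos.
  pose proof (surv_rate_bounds q ltac:(lra)). pose proof (surv_rate_lt1 q ltac:(lra)).
  destruct (geometric_lt (surv_rate q) (M + 1) _ ltac:(lra) Hpos) as [K HK].
  specialize (Hbound K). lra.
Qed.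

(* Within [3K] steps the drift [a (d - 1/r)] stays in [[0, 1/(2r))], and it is positive
   whenever the lattice index has reached [r]. *)
Lemma PY_near_left (q d : R) (r K : nat) : 0 < q < 1 -> (1 <= r)%nat -> / INR r < d ->
  INR (3 * K) * (d - / INR r) < / INR r / 2 ->
  Rabs (PY q d 0 - lattice_cascade q r) <= 2 * surv_rate q ^ K.
Proof.
  intros Hq Hr Hd HK.
  set (dl := d - / INR r) in *.
  assert (Hdl : 0 < dl) by (unfold dl; lra).
  replace (lattice_cascade q r) with (PY q (/ INR r) (mid_lattice r 0)).
  2:{ rewrite PY_mid_lattice by auto. change 0%Z with (- Z.of_nat 0)%Z.
      rewrite (lattice_cascade_at_neg q r ltac:(lra) Hr 0) by lia. simpl. ring. }
  apply PY_coupled_close; [lra|]. intros a b Hab.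
  assert (Ha : 0 <= INR a * dl < / INR r / 2).
  { assert (INR a <= INR (3 * K)) by (apply le_INR; lia). pose proof (pos_INR a). split; nra. }
  replace (0 + INR a * d - INR b) with (INR a * (/ INR r + dl) - INR b) by (unfold dl; ring).
  replace (mid_lattice r 0 + INR a * / INR r - INR b)
    with (INR a * (/ INR r + 0) - INR b + / INR r / 2)
    by (unfold mid_lattice; field; apply not_0_INR; lia).
  rewrite !lattice_position, Rmult_0_r, Rplus_0_r by assumption.
  apply same_region_lattice; auto; try (rewrite Rabs_pos_eq; lra).
  - intros Hz. assert (a <> 0%nat) by nia.
    assert (0 < INR a * dl) by (apply Rmult_lt_0_compat; [apply lt_0_INR; lia | lra]). lra.
  - intros _. lra.
Qed.

(* Started just after an up-step, the drift [(a + 1) (d - 1/r)] lies in [(-1/(2r), 0)]. *)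
Lemma PY_near_right_shifted (q d : R) (r K b0 : nat) : 0 <= q <= 1 -> (1 <= r)%nat -> d < / INR r ->
  INR (3 * K + 1) * (/ INR r - d) < / INR r / 2 ->
  Rabs (PY q d (d - INR b0) - PY q (/ INR r) (mid_lattice r (- Z.of_nat b0 * Z.of_nat r)))
    <= 2 * surv_rate q ^ K.
Proof.
  intros Hq Hr Hd HK.
  set (dl := d - / INR r) in *.
  assert (Hdl : dl < 0) by (unfold dl; lra).
  replace (/ INR r - d) with (- dl) in HK by (unfold dl; ring).
  apply PY_coupled_close; [lra|]. intros a b Hab.
  assert (Ha : - (/ INR r / 2) < INR (S a) * dl < 0).
  { assert (INR (S a) <= INR (3 * K + 1)) by (apply le_INR; lia).
    pose proof (lt_0_INR (S a) ltac:(lia)). split; nra. }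
  replace (d - INR b0 + INR a * d - INR b) with (INR (S a) * (/ INR r + dl) - INR (b + b0))
    by (unfold dl; rewrite S_INR, plus_INR; ring).
  replace (mid_lattice r (- Z.of_nat b0 * Z.of_nat r) + INR a * / INR r - INR b)
    with (INR (S a) * (/ INR r + 0) - INR (b + b0) + - (/ INR r / 2)).
  2:{ unfold mid_lattice. rewrite mult_IZR, opp_IZR, <- !INR_IZR_INZ, S_INR, plus_INR.
      field. apply not_0_INR; lia. }
  rewrite !lattice_position, Rmult_0_r, Rplus_0_r by assumption.
  apply same_region_lattice; auto; try (apply Rabs_lt_between; lra); intros _; lra.
Qed.

Lemma PY_near_right (q d : R) (r K : nat) : 0 < q < 1 -> (1 <= r)%nat -> d < / INR r ->
  INR (3 * K + 1) * (/ INR r - d) < / INR r / 2 ->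
  Rabs (PY q d 0 - lattice_cascade_right q r) <= 2 * surv_rate q ^ K.
Proof.
  intros Hq Hr Hd HK.
  (* From 0 a down-step leads to -1, from where a second one exits below. *)
  assert (Hstart : PY q d 0 = q * PY q d (d - INR 0) + (1 - q) * q * PY q d (d - INR 1)).
  { rewrite (PY_step q d ltac:(lra) 0), (PY_step q d ltac:(lra) (0 - 1)) by lra.
    rewrite (PY_below q d (0 - 1 - 1)) by lra.
    replace (0 + d) with (d - INR 0) by (simpl; ring).
    replace (0 - 1 + d) with (d - INR 1) by (simpl; ring). ring. }
  pose proof (PY_near_right_shifted q d r K 0 ltac:(lra) Hr ltac:(lra) HK) as Hup.
  pose proof (PY_near_right_shifted q d r K 1 ltac:(lra) Hr ltac:(lra) HK) as Hdown.
  replace (- Z.of_nat 1 * Z.of_nat r)%Z with (- Z.of_nat r)%Z in Hdown by lia.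
  rewrite !PY_mid_lattice in Hup, Hdown by auto.
  change (- Z.of_nat 0 * Z.of_nat r)%Z with (- Z.of_nat 0)%Z in Hup.
  rewrite (lattice_cascade_at_neg q r ltac:(lra) Hr 0) in Hup by lia.
  rewrite (lattice_cascade_at_neg q r ltac:(lra) Hr r) in Hdown by lia.
  simpl pow in Hup. rewrite Rmult_1_l in Hup.
  unfold lattice_cascade_right.
  set (e := 2 * surv_rate q ^ K) in *. set (F := lattice_cascade q r) in *.
  set (A := PY q d (d - INR 0)) in *. set (B := PY q d (d - INR 1)) in *.
  rewrite Hstart.
  replace (q * A + (1 - q) * q * B - (q * F + (1 - q) * q * (q ^ r * F)))
    with (q * (A - F) + (1 - q) * q * (B - q ^ r * F)) by ring.
  eapply Rle_trans; [apply Rabs_triang|].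
  rewrite !Rabs_mult, (Rabs_pos_eq q), (Rabs_pos_eq (1 - q)) by lra.
  pose proof (Rabs_pos (A - F)). pose proof (Rabs_pos (B - q ^ r * F)).
  assert (0 <= q * Rabs (A - F) <= q * e)
    by (split; [apply Rmult_le_pos | apply Rmult_le_compat_l]; lra).
  assert (0 <= (1 - q) * q * Rabs (B - q ^ r * F) <= (1 - q) * q * e)
    by (split; [apply Rmult_le_pos | apply Rmult_le_compat_l]; nra).
  nra.
Qed.

Lemma alpha_gt1 (p : R) : 1 / 2 < p < 1 -> 1 < alpha p.
Proof.
  intros Hp. unfold alpha. apply (Rmult_lt_reg_r (1 - p)); [lra|].
  unfold Rdiv. rewrite Rmult_assoc, Rinv_l; lra.
Qed.

Definition signal_ratio (p e : R) : R := par_a p e / (1 - par_b p e).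

Lemma signal_ratio_pos (p e : R) : 1 / 2 < p < 1 -> 0 <= e -> 0 < signal_ratio p e.
Proof. intros. unfold signal_ratio, par_a, par_b. apply Rdiv_lt_0_compat; nra. Qed.

Lemma signal_ratio_decreasing (p e1 e2 : R) : 1 / 2 < p < 1 -> 0 <= e1 < e2 ->
  signal_ratio p e2 < signal_ratio p e1.
Proof.
  intros Hp He. unfold signal_ratio, par_a, par_b.
  assert (0 < 1 - p * (1 - e1)) by nra. assert (0 < 1 - p * (1 - e2)) by nra.
  enough (0 < (p + (1 - p) * e1) / (1 - p * (1 - e1)) - (p + (1 - p) * e2) / (1 - p * (1 - e2)))
    by lra.
  replace ((p + (1 - p) * e1) / (1 - p * (1 - e1)) - (p + (1 - p) * e2) / (1 - p * (1 - e2)))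
    with ((2 * p - 1) * (e2 - e1) / ((1 - p * (1 - e1)) * (1 - p * (1 - e2)))) by (field; lra).
  apply Rdiv_lt_0_compat; nra.
Qed.

Lemma eta_decreasing (p e1 e2 : R) : 1 / 2 < p < 1 -> 0 <= e1 < e2 -> eta p e2 < eta p e1.
Proof.
  intros Hp He. pose proof (alpha_gt1 p Hp).
  assert (0 < ln (alpha p)) by (rewrite <- ln_1; apply ln_increasing; lra).
  unfold eta. fold (signal_ratio p e1) (signal_ratio p e2).
  apply Rmult_lt_compat_r; [apply Rinv_0_lt_compat; lra|].
  apply ln_increasing; [apply signal_ratio_pos; lra | apply signal_ratio_decreasing; lra].
Qed.

(* [eps_r] inverts the signal ratio at the level [alpha^(1/r)], which makes [eta = 1/r]. *)
Lemma eps_r_spec (p : R) (r : nat) : 1 / 2 < p < 1 -> (2 <= r)%nat ->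
  0 < eps_r p r < 1 /\ eta p (eps_r p r) = / INR r.
Proof.
  intros Hp Hr. pose proof (alpha_gt1 p Hp) as Ha.
  assert (HR : 2 <= INR r) by (apply (le_INR 2); lia).
  assert (Hla : 0 < ln (alpha p)) by (rewrite <- ln_1; apply ln_increasing; lra).
  set (t := Rpower (alpha p) (1 / INR r)).
  assert (Ht : 1 < t < alpha p).
  { assert (0 < 1 / INR r < 1).
    { split; [apply Rdiv_lt_0_compat; lra|].
      apply (Rmult_lt_reg_r (INR r)); [lra|]. unfold Rdiv. rewrite Rmult_1_l, Rinv_l; lra. }
    assert (Rpower (alpha p) 0 < t < Rpower (alpha p) 1) by (split; apply Rpower_lt; lra).
    rewrite Rpower_O, Rpower_1 in * by lra. lra. }
  assert (He : eps_r p r = (alpha p - t) / (t * alpha p - 1)).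
  { unfold eps_r. rewrite Rpower_plus, Rpower_1 by lra. reflexivity. }
  assert (Hp' : p = alpha p / (1 + alpha p)) by (unfold alpha; field; lra).
  assert (Hratio : signal_ratio p (eps_r p r) = t).
  { rewrite He. unfold signal_ratio, par_a, par_b. set (a := alpha p) in *. clearbody a t.
    subst p. field. nra. }
  split.
  - rewrite He. split; [apply Rdiv_lt_0_compat; nra|].
    apply (Rmult_lt_reg_r (t * alpha p - 1)); [nra|].
    unfold Rdiv. rewrite Rmult_assoc, Rinv_l; nra.
  - unfold eta. fold (signal_ratio p (eps_r p r)). rewrite Hratio.
    unfold t, Rpower. rewrite ln_exp. field. lra.
Qed.

Lemma pf_bounds (p e : R) (V : value) : 1 / 2 < p < 1 -> 0 < e < 1 -> 0 < pf p e V < 1.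
Proof. intros. destruct V; unfold pf, par_a, par_b; split; nra. Qed.

Lemma pf_continuous (p : R) (V : value) (e : R) : continuous (fun e => pf p e V) e.
Proof.
  apply (ex_derive_continuous (K := R_AbsRing) (V := R_NormedModule)).
  destruct V; unfold pf, par_a, par_b; auto_derive; trivial.
Qed.

Lemma eta_continuous (p e : R) : 1 / 2 < p < 1 -> 0 <= e -> continuous (eta p) e.
Proof.
  intros Hp He. apply (ex_derive_continuous (K := R_AbsRing) (V := R_NormedModule)).
  unfold eta, par_a, par_b. auto_derive. repeat split; try nra.
  apply Rmult_lt_0_compat; [nra | apply Rinv_0_lt_compat; nra].
Qed.

Lemma lattice_cascade_continuous (r : nat) (q : R) : 0 < q <= 1 ->
  continuous (fun q => lattice_cascade q r) q.
Proof.
  intros Hq. pose proof (cascade_denom_pos q r Hq).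
  apply (ex_derive_continuous (K := R_AbsRing) (V := R_NormedModule)).
  unfold lattice_cascade, cascade_denom in *. auto_derive. lra.
Qed.

Lemma lattice_cascade_right_continuous (r : nat) (q : R) : 0 < q <= 1 ->
  continuous (fun q => lattice_cascade_right q r) q.
Proof.
  intros Hq. pose proof (cascade_denom_pos q r Hq).
  apply (ex_derive_continuous (K := R_AbsRing) (V := R_NormedModule)).
  unfold lattice_cascade_right, lattice_cascade, cascade_denom in *. auto_derive.
  repeat split; lra.
Qed.

Lemma ball_Rabs (x eps y : R) : ball x eps y <-> Rabs (y - x) < eps.
Proof. reflexivity. Qed.

Lemma surv_rate_pow_le (q q1 : R) (K : nat) : 0 <= q <= q1 -> q1 <= 1 ->
  surv_rate q ^ K <= surv_rate q1 ^ K.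
Proof.
  intros Hq Hq1. apply pow_incr. split; [apply surv_rate_bounds; lra|].
  unfold surv_rate. assert ((1 - q1) ^ 3 <= (1 - q) ^ 3) by (apply pow_incr; lra). lra.
Qed.

Lemma PY_uniform_limit (G : R -> R) (S : R -> Prop) (q0 : R) (r : nat) :
  (1 <= r)%nat -> 0 < q0 < 1 -> continuous G q0 ->
  (forall q d K, 0 < q < 1 -> S d -> INR (3 * K + 1) * Rabs (d - / INR r) < / INR r / 2 ->
     Rabs (PY q d 0 - G q) <= 2 * surv_rate q ^ K) ->
  forall eps : posreal, exists delta : posreal, forall q d,
    Rabs (q - q0) < delta -> Rabs (d - / INR r) < delta -> S d -> Rabs (PY q d 0 - G q0) < eps.
Proof.
  intros Hr Hq0 HG Hnear eps.
  assert (HR : 0 < INR r) by (apply lt_0_INR; lia).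
  assert (Hu : 0 < / INR r) by (apply Rinv_0_lt_compat; lra).
  set (q1 := (1 + q0) / 2).
  pose proof (surv_rate_bounds q1 ltac:(unfold q1; lra)).
  pose proof (surv_rate_lt1 q1 ltac:(unfold q1; lra)).
  destruct (geometric_lt (surv_rate q1) 2 (eps / 2) ltac:(lra) ltac:(destruct eps; simpl; lra))
    as [K HK].
  destruct (proj1 (filterlim_locally G (G q0)) HG (pos_div_2 eps)) as [dG HdG].
  set (N := INR (3 * K + 1)).
  assert (HN : 0 < N) by (apply lt_0_INR; lia).
  assert (Hdelta : 0 < Rmin (Rmin q0 ((1 - q0) / 2)) (Rmin dG (/ INR r / 2 / N))).
  { destruct dG. repeat apply Rmin_pos; simpl; try lra. apply Rdiv_lt_0_compat; lra. }
  exists (mkposreal _ Hdelta). simpl. intros q d Hq Hd HS.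
  pose proof (Rmin_l (Rmin q0 ((1 - q0) / 2)) (Rmin dG (/ INR r / 2 / N))).
  pose proof (Rmin_r (Rmin q0 ((1 - q0) / 2)) (Rmin dG (/ INR r / 2 / N))).
  pose proof (Rmin_l q0 ((1 - q0) / 2)). pose proof (Rmin_r q0 ((1 - q0) / 2)).
  pose proof (Rmin_l dG (/ INR r / 2 / N)). pose proof (Rmin_r dG (/ INR r / 2 / N)).
  apply Rabs_lt_between in Hq.
  assert (Hclose : N * Rabs (d - / INR r) < / INR r / 2).
  { assert (Hd' : Rabs (d - / INR r) < / INR r / 2 / N) by lra.
    apply (Rmult_lt_compat_l N) in Hd'; [|lra].
    replace (N * (/ INR r / 2 / N)) with (/ INR r / 2) in Hd' by (field; lra). exact Hd'. }
  specialize (Hnear q d K ltac:(lra) HS Hclose).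
  specialize (HdG q ltac:(apply ball_Rabs, Rabs_lt_between; lra)).
  pose proof (surv_rate_pow_le q q1 K ltac:(unfold q1; lra) ltac:(unfold q1; lra)).
  change (Rabs (G q - G q0) < eps / 2) in HdG.
  apply Rabs_le_between in Hnear. apply Rabs_lt_between in HdG.
  apply Rabs_lt_between. lra.
Qed.

Lemma filterlim_uniform_approx {F : (R -> Prop) -> Prop} {FF : Filter F}
  (f g : R -> R) (H : R -> R -> R) (S : R -> Prop) (q0 d0 L : R) :
  filterlim f F (locally q0) -> filterlim g F (locally d0) -> F (fun e => S (g e)) ->
  (forall eps : posreal, exists delta : posreal, forall q d,
     Rabs (q - q0) < delta -> Rabs (d - d0) < delta -> S d -> Rabs (H q d - L) < eps) ->
  filterlim (fun e => H (f e) (g e)) F (locally L).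
Proof.
  intros Hf Hg HS Happrox. apply filterlim_locally. intros eps.
  destruct (Happrox eps) as [delta Hdelta].
  apply filterlim_locally with (eps := delta) in Hf, Hg.
  generalize (filter_and _ _ Hf (filter_and _ _ Hg HS)). apply filter_imp.
  intros e (Hfe & Hge & HSe). apply ball_Rabs. apply ball_Rabs in Hfe, Hge. auto.
Qed.

Lemma PYcas_left_limit (p : R) (V : value) (r : nat) : 1 / 2 < p < 1 -> (2 <= r)%nat ->
  filterlim (fun e => PYcas p e V) (at_left (eps_r p r))
    (locally (lattice_cascade (pf p (eps_r p r) V) r)).
Proof.
  intros Hp Hr. destruct (eps_r_spec p r Hp Hr) as [Hx Heta].
  pose proof (pf_bounds p (eps_r p r) V Hp Hx) as Hq0.
  apply (filterlim_uniform_approx (fun e => pf p e V) (eta p) (fun q d => PY q d 0)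
           (fun d => / INR r < d) (pf p (eps_r p r) V) (/ INR r)).
  - eapply filterlim_filter_le_1; [apply filter_le_within | apply pf_continuous].
  - rewrite <- Heta.
    eapply filterlim_filter_le_1; [apply filter_le_within | apply eta_continuous; lra].
  - exists (mkposreal _ (proj1 Hx)). intros e He Hlt.
    change (Rabs (e - eps_r p r) < eps_r p r) in He. apply Rabs_lt_between in He.
    rewrite <- Heta. apply eta_decreasing; lra.
  - apply (PY_uniform_limit (fun q => lattice_cascade q r));
      [lia | lra | apply lattice_cascade_continuous; lra |].
    intros q d K Hq Hd HK. apply PY_near_left; auto; [lia|].
    rewrite Rabs_pos_eq in HK by lra.
    assert (INR (3 * K) <= INR (3 * K + 1)) by (apply le_INR; lia).
    assert (0 < d - / INR r) by lra. nra.
Qed.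

Lemma PYcas_right_limit (p : R) (V : value) (r : nat) : 1 / 2 < p < 1 -> (2 <= r)%nat ->
  let q := pf p (eps_r p r) V in
  filterlim (fun e => PYcas p e V) (at_right (eps_r p r))
    (locally (lattice_cascade_right q r)).
Proof.
  intros Hp Hr q0. destruct (eps_r_spec p r Hp Hr) as [Hx Heta].
  assert (Hq0 : 0 < q0 < 1) by (apply pf_bounds; assumption).
  apply (filterlim_uniform_approx (fun e => pf p e V) (eta p) (fun q d => PY q d 0)
           (fun d => d < / INR r) q0 (/ INR r)).
  - eapply filterlim_filter_le_1; [apply filter_le_within | apply pf_continuous].
  - rewrite <- Heta.
    eapply filterlim_filter_le_1; [apply filter_le_within | apply eta_continuous; lra].
  - exists (mkposreal _ (proj1 Hx)). intros e _ Hgt. rewrite <- Heta. apply eta_decreasing; lra.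
  - apply (PY_uniform_limit (fun q => lattice_cascade_right q r));
      [lia | lra | apply lattice_cascade_right_continuous; lra |].
    intros q d K Hq Hd HK. apply PY_near_right; auto; [lia|].
    rewrite Rabs_minus_sym, Rabs_pos_eq in HK by lra. exact HK.
Qed.

Theorem mainTheorem5 (p : R) (V : value) (r : nat) :
  1 / 2 < p < 1 -> (2 <= r)%nat ->
  let q := pf p (eps_r p r) V in
  let Lplus := q ^ (r + 1) * (1 + (1 - q) * q ^ r) / (1 - INR r * (1 - q) * q ^ r) in
  let Lminus := q ^ r / (1 - INR r * (1 - q) * q ^ r) in
  filterlim (fun e => PYcas p e V) (at_right (eps_r p r)) (locally Lplus) /\
  filterlim (fun e => PYcas p e V) (at_left (eps_r p r)) (locally Lminus) /\
  Lplus < Lminus /\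
  (Lminus - Lplus) / Lminus = (1 - q) * (1 - q ^ (r + 1)).
Proof.
  intros Hp Hr q Lplus Lminus.
  destruct (eps_r_spec p r Hp Hr) as [Hx _].
  assert (Hq : 0 < q < 1) by (apply pf_bounds; assumption).
  pose proof (cascade_denom_pos q r ltac:(lra)) as HD. unfold cascade_denom in HD.
  assert (Hqr : 0 < q ^ r < 1) by (split; [apply pow_lt | apply pow_lt_1_compat; try lia]; lra).
  assert (Eplus : Lplus = lattice_cascade_right q r).
  { unfold Lplus, lattice_cascade_right, lattice_cascade, cascade_denom.
    rewrite pow_add, pow_1. field. lra. }
  assert (Eminus : Lminus = lattice_cascade q r) by reflexivity.
  split; [rewrite Eplus; apply PYcas_right_limit; assumption|].
  split; [rewrite Eminus; apply PYcas_left_limit; assumption|].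
  unfold Lplus, Lminus. rewrite pow_add, pow_1. split.
  - apply Rmult_lt_compat_r; [apply Rinv_0_lt_compat; lra|].
    assert (q * q ^ r < 1) by nra.
    assert (0 < (1 - q) * (1 - q * q ^ r)) by (apply Rmult_lt_0_compat; lra). nra.
  - field. lra.
Qed.
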